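(* Let $G=(V,E)$ be a chordal graph on a non-empty finite vertex set $V$, and let $\{A_v\}_{v\in V}$ be events in a probability space. Then for every integer $r\ge 1$, \[ \sum_{I\in\mathscr{C}(G)} (-1)^{|I|-1}\,\Pr\Big(\bigcap_{i\in I} A_i\Big) \;\ge\; \sum_{\substack{I\in\mathscr{C}(G)\\ |I|\le 2r}} (-1)^{|I|-1}\,\Pr\Big(\bigcap_{i\in I} A_i\Big). \]
   Context: A graph is chordal if it contains no cycle of length four or more as an induced subgraph. $\mathscr{C}(G)$ denotes the clique complex of $G$: the set of all non-empty subsets $I\subseteq V$ whose elements are pairwise adjacent in $G$. *)

From HB Require Import structures.
From mathcomp Require Import all_boot.
From Stdlib Require Import Reals.

Record probability_space := ProbSpace {
  ps_carrier :> Type;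
  ps_meas : (ps_carrier -> Prop) -> Prop;
  ps_P : (ps_carrier -> Prop) -> R;
  ps_meas_full : ps_meas (fun _ => True);
  ps_meas_compl : forall A, ps_meas A -> ps_meas (fun w => ~ A w);
  ps_meas_cunion : forall F : nat -> ps_carrier -> Prop,
      (forall n, ps_meas (F n)) -> ps_meas (fun w => exists n, F n w);
  ps_P_nonneg : forall A, ps_meas A -> (0 <= ps_P A)%R;
  ps_P_full : ps_P (fun _ => True) = 1%R;
  ps_P_sigma : forall F : nat -> ps_carrier -> Prop,
      (forall n, ps_meas (F n)) ->
      (forall m n, m <> n -> forall w, F m w -> F n w -> False) ->
      infinite_sum (fun n => ps_P (F n)) (ps_P (fun w => exists n, F n w))
}.

Set Implicit Arguments.
Unset Strict Implicit.
Unset Printing Implicit Defensive.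

(* A simple graph on a finite type V is a symmetric irreflexive relation e. *)

Definition induced_cycle (V : eqType) (e : rel V) (x0 : V) (s : seq V) : Prop :=
  forall i j, (i < size s)%N -> (j < size s)%N ->
    (e (nth x0 s i) (nth x0 s j) <->
     (j == i.+1 %% size s) || (i == j.+1 %% size s)).

Definition chordal (V : eqType) (e : rel V) : Prop :=
  forall (x0 : V) (s : seq V), uniq s -> (4 <= size s)%N -> ~ induced_cycle e x0 s.

Definition in_clique_complex (V : finType) (e : rel V) (I : {set V}) : bool :=
  (I != set0) && [forall x in I, forall y in I, (x != y) ==> e x y].

Definition bigcap_events (V : finType) (Om : probability_space)
  (A : V -> Om -> Prop) (I : {set V}) : Om -> Prop :=
  fun w => forall i, i \in I -> A i w.

Definition clique_term (V : finType) (Om : probability_space)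
  (A : V -> Om -> Prop) (I : {set V}) : R :=
  ((-1) ^ (subn #|I| 1) * ps_P Om (bigcap_events A I))%R.

(* Expanding each Pr(A_I), A_I = the intersection of the A_i for i in I, over the atoms
   {w | {v | w \in A_v} = T} turns the omitted terms (cliques of size > 2r) into
   sum_T Pr(atom T) * (- g_(2r+1)(T)), where g_k(T) is the sum of (-1)^|I| over the cliques
   I of T with |I| >= k.  So it suffices that (-1)^k g_k(T) >= 0 for k >= 1.  By Dirac's
   lemma every non-empty vertex set T of a chordal graph has a simplicial vertex v, whose
   neighbourhood in T is a clique; splitting the cliques according to whether they contain v
   gives g_k(T) = g_k(T - v) - g_(k-1)(N(v) /\ T), and induction on |T| concludes since
   g_0 of a clique is 0 or 1. *)

From HB Require Import structures.
From mathcomp Require Import all_boot zify.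
From Stdlib Require Import Reals Lra.
From Stdlib Require Import Classical ClassicalEpsilon FunctionalExtensionality PropExtensionality.

Set Implicit Arguments.
Unset Strict Implicit.
Unset Printing Implicit Defensive.

HB.instance Definition _ := Monoid.isComLaw.Build R 0%R Rplus
  (fun a b c => esym (Rplus_assoc a b c)) Rplus_comm Rplus_0_l.
HB.instance Definition _ := Monoid.isMulLaw.Build R 0%R Rmult Rmult_0_l Rmult_0_r.
HB.instance Definition _ :=
  Monoid.isAddLaw.Build R Rmult Rplus Rmult_plus_distr_r Rmult_plus_distr_l.

Lemma eq_succ_modn n i j : i < n ->
  (j == i.+1 %% n) = if i.+1 == n then j == 0 else j == i.+1.
Proof.
move=> lt_in; have [-> | neq] := eqVneq i.+1 n; first by rewrite modnn.
by rewrite modn_small // ltn_neqAle neq.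
Qed.

Section ChordlessPaths.
Variables (V : finType) (e : rel V).
Implicit Types (x y : V) (p : seq V).

Lemma last_take x p i : i <= size p -> last x (take i p) = nth x (x :: p) i.
Proof.
elim: p x i => [|a p IHp] x [|i] //= lt_i.
by rewrite IHp // (set_nth_default x).
Qed.

(* [nth x p j] is the vertex at position [j.+1] on the path [x :: p]: a chordless
   path has no edge between positions [i] and [j.+1] for [i < j]. *)
Definition chordless x p := forall i j, i < j < size p -> ~~ e (nth x (x :: p) i) (nth x p j).

Lemma path_shortcut x p i j : path e x p -> i < j < size p ->
    e (nth x (x :: p) i) (nth x p j) ->
  [/\ path e x (take i p ++ drop j p), last x (take i p ++ drop j p) = last x p
    & size (take i p ++ drop j p) < size p].
Proof.
move=> p_path /andP[lt_ij lt_j] eij.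
have le_i : i <= size p by lia.
have /andP[path_i _] : path e x (take i p) && path e (last x (take i p)) (drop i p).
  by rewrite -cat_path cat_take_drop.
have /andP[_ path_j] : path e x (take j.+1 p) && path e (last x (take j.+1 p)) (drop j.+1 p).
  by rewrite -cat_path cat_take_drop.
rewrite last_take // in path_j.
rewrite (drop_nth x lt_j) cat_path last_take //= eij path_i path_j last_cat last_take //=.
split=> //.
  by rewrite -[p in RHS](cat_take_drop j.+1) last_cat last_take.
by rewrite size_cat size_takel //= size_drop; lia.
Qed.

Lemma chordless_path x y : connect e x y -> exists p,
  [/\ path e x p, last x p = y, uniq (x :: p) & chordless x p].
Proof.
case/connectP=> p0 p0_path ->{y}.
suff: forall n p, size p <= n -> path e x p -> exists p',
    [/\ path e x p', last x p' = last x p, uniq (x :: p') & chordless x p'].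
  by move/(_ _ p0 (leqnn _) p0_path).
elim=> [|n IHn] p le_p p_path.
  by case: p le_p p_path => // _ _; exists [::]; split=> // i j; rewrite andbF.
case: (shortenP p_path) => p' p'_path p'_uniq sub_p'.
have le_p' : size p' <= size p by apply: uniq_leq_size sub_p'; case/andP: p'_uniq.
have [[i [j [lt_ij eij]]] | no_chord] :=
  classic (exists i j, i < j < size p' /\ e (nth x (x :: p') i) (nth x p' j)).
  have [q_path <- lt_q] := path_shortcut p'_path lt_ij eij.
  by apply: IHn q_path; rewrite -ltnS (leq_trans lt_q) // (leq_trans le_p').
exists p'; split=> // i j lt_ij; apply/negP => eij; by apply: no_chord; exists i, j.
Qed.

Lemma chordless_induced x p : symmetric e -> irreflexive e -> path e x p ->
    chordless x p ->
  forall i j, i < size (x :: p) -> j < size (x :: p) ->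
    e (nth x (x :: p) i) (nth x (x :: p) j) = (j == i.+1) || (i == j.+1).
Proof.
move=> e_sym e_irr p_path p_chordless.
suff lt_case i j :
    i < j < size (x :: p) -> e (nth x (x :: p) i) (nth x (x :: p) j) = (j == i.+1).
  move=> i j lt_i lt_j; case: (ltngtP i j) => [lt_ij|lt_ji|->].
  - by rewrite lt_case ?lt_ij // (_ : i == j.+1 = false) ?orbF //; lia.
  - by rewrite e_sym lt_case ?lt_ji // (_ : j == i.+1 = false); lia.
  - by rewrite e_irr (_ : j == j.+1 = false); lia.
case: j => [|j] /andP[lt_ij lt_j] //=; rewrite eqSS.
rewrite ltnS leq_eqVlt in lt_ij; case/orP: lt_ij => [/eqP-> | lt_ij].
  by rewrite eqxx; move/(pathP x): p_path; apply.
by rewrite (gtn_eqF lt_ij); apply/negbTE/p_chordless; rewrite lt_ij.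
Qed.
End ChordlessPaths.

Section ChordalGraphs.
Variables (V : finType) (e : rel V).
Hypotheses (e_sym : symmetric e) (e_irr : irreflexive e) (e_chordal : chordal e).
Implicit Types (I J Q T W : {set V}) (v x y z : V).

Definition clique T := [forall x in T, forall y in T, (x != y) ==> e x y].

Definition nbhd x := [set y | e x y].

Definition simplicial T x := clique (T :&: nbhd x).

Definition induced W : rel V := [rel a b | [&& a \in W, b \in W & e a b]].

Lemma cliqueP T : reflect {in T &, forall x y, x != y -> e x y} (clique T).
Proof.
apply: (iffP forall_inP) => [cl x y xT yT | cl x xT].
  by move/forall_inP/(_ y yT)/implyP: (cl x xT).
by apply/forall_inP => y yT; apply/implyP; apply: cl.
Qed.

Lemma cliquePn T : ~~ clique T -> exists u w, [/\ u \in T, w \in T, u != w & ~~ e u w].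
Proof.
move=> ncl; apply: NNPP => no_pair; case/cliqueP: ncl => u w uT wT neq_uw.
by apply/negPn/negP => nuw; apply: no_pair; exists u, w.
Qed.

Lemma clique_subset T1 T2 : T1 \subset T2 -> clique T2 -> clique T1.
Proof. by move=> /subsetP sT12 /cliqueP cl; apply/cliqueP => x y /sT12 xT /sT12; apply: cl. Qed.

Lemma induced_sym W : symmetric (induced W).
Proof. by move=> a b; rewrite /induced /= e_sym andbCA. Qed.

Lemma induced_irr W : irreflexive (induced W).
Proof. by move=> a; rewrite /induced /= e_irr !andbF. Qed.

Lemma connect_induced_sub W1 W2 :
  W1 \subset W2 -> subrel (connect (induced W1)) (connect (induced W2)).
Proof.
move=> /subsetP sW12; apply: connect_sub => a b /and3P[aW bW ab].
by apply: connect1; rewrite /induced /= ab !sW12.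
Qed.

Lemma induced_path_sub W a p : a \in W -> path (induced W) a p -> {subset a :: p <= W}.
Proof.
elim: p a => [|b p IHp] a aW /=; first by move=> _ z; rewrite mem_seq1 => /eqP->.
case/andP=> /and3P[_ bW _] /(IHp b bW) sub_p z; rewrite inE => /orP[/eqP-> // | ].
exact: sub_p.
Qed.


Lemma chordal_no_hole x0 x q : uniq (x :: q) -> 3 <= size q ->
    (forall k, k < size q -> e x (nth x0 q k) = (k == 0) || (k == (size q).-1)) ->
    (forall i j, i < size q -> j < size q ->
       e (nth x0 q i) (nth x0 q j) = (j == i.+1) || (i == j.+1)) ->
  False.
Proof.
move=> q_uniq q_ge3 x_adj q_induced.
apply: (e_chordal (x0 := x0) q_uniq); first by rewrite /= ltnS.
move=> i j /= lt_i lt_j; apply/Bool.eq_iff_eq_true.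
rewrite (eq_succ_modn j lt_i) (eq_succ_modn i lt_j).
case: i j lt_i lt_j => [|i] [|j] /= lt_i lt_j.
- by rewrite e_irr; repeat case: ifP => ?; lia.
- by rewrite x_adj //; repeat case: ifP => ?; lia.
- by rewrite e_sym x_adj //; repeat case: ifP => ?; lia.
- by rewrite q_induced //; repeat case: ifP => ?; lia.
Qed.

Lemma chordal_path_adj W x s t : x \notin W -> s \in W -> t \in W -> s != t ->
    {in W, forall w, e x w = (w == s) || (w == t)} ->
  connect (induced W) s t -> e s t.
Proof.
move=> xNW sW tW neq_st x_adj.
case/chordless_path=> p [p_path last_p p_uniq p_chordless].
apply/negP => nst.
have q_sub := induced_path_sub sW p_path.
have q_induced := chordless_induced (induced_sym W) (induced_irr W) p_path p_chordless.
have q_nth k : k < size (s :: p) -> nth s (s :: p) k \in W by move/(mem_nth s)/q_sub.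
apply: (@chordal_no_hole s x (s :: p)).
- by rewrite cons_uniq p_uniq andbT; apply: contra xNW; apply: q_sub.
- move: p_path last_p; case: (p) => [|a [|b p']] //=.
    by move=> _ eq_st; rewrite eq_st eqxx in neq_st.
  by move=> /andP[/and3P[_ _ sa] _] eq_at; rewrite -eq_at sa in nst.
- move=> k lt_k; rewrite x_adj ?q_nth //.
  have t_nth : t = nth s (s :: p) (size p).
    by rewrite -last_p -[last s p]/(last s (s :: p)) -nth_last.
  have -> : (nth s (s :: p) k == s) = (k == 0) by exact: nth_uniq lt_k (ltn0Sn _) p_uniq.
  by rewrite t_nth nth_uniq.
- by move=> i j lt_i lt_j; rewrite -q_induced // /induced /= !q_nth.
Qed.

Definition far T x := [set z in T | (z != x) && ~~ e x z].

Lemma farE T x z : (z \in far T x) = [&& z \in T, z != x & ~~ e x z].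
Proof. by rewrite inE. Qed.

Lemma far_nadj T x z : z \in far T x -> ~~ e x z.
Proof. by rewrite farE => /and3P[]. Qed.

Definition component W y := [set c | connect (induced W) y c].

Definition separator T x y :=
  [set s in T | e x s && [exists c in component (far T x) y, e s c]].

Lemma component_sub W y : y \in W -> component W y \subset W.
Proof.
move=> yW; apply/subsetP => c; rewrite inE => /connectP[p y_p ->].
exact: induced_path_sub yW y_p _ (mem_last y p).
Qed.

Lemma component_closed W y c z : y \in W -> c \in component W y -> z \in W -> e c z ->
  z \in component W y.
Proof.
move=> yW cC zW cz; have cW := subsetP (component_sub yW) c cC.
rewrite /component !inE in cC *; apply: (connect_trans cC); apply: connect1.
by rewrite /induced /= cW zW.
Qed.

Section Separator.
Variables (T : {set V}) (x y : V).
Hypotheses (xT : x \in T) (y_far : y \in far T x).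
Local Notation C := (component (far T x) y).
Local Notation S := (separator T x y).

Lemma component_nbhd c : c \in C -> T :&: nbhd c \subset C :|: S.
Proof.
move=> cC; have c_far := subsetP (component_sub y_far) c cC.
apply/subsetP => z; rewrite in_setI in_setU inE => /andP[zT cz].
have neq_zx : z != x by apply: contraNneq (far_nadj c_far) => eq_zx; rewrite e_sym -eq_zx.
case xz: (e x z).
  by apply/orP; right; rewrite inE zT xz; apply/exists_inP; exists c; rewrite // e_sym.
by rewrite (component_closed y_far cC) // inE zT neq_zx xz.
Qed.

Lemma simplicial_component c : c \in C -> simplicial (C :|: S) c ->
  exists2 z, z \in far T x & simplicial T z.
Proof.
move=> cC c_simp; exists c; first exact: subsetP (component_sub y_far) c cC.
by apply: clique_subset c_simp; rewrite subsetI subsetIr component_nbhd.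
Qed.

Lemma card_component_separator : #|C :|: S| < #|T|.
Proof.
rewrite (cardsD1 x T) xT add1n ltnS; apply/subset_leq_card/subsetP.
move=> z; rewrite in_setU => /orP[/(subsetP (component_sub y_far)) | ].
  by rewrite !inE => /and3P[-> -> _].
by rewrite !inE => /and3P[-> xz _]; rewrite andbT; apply: contraTneq xz => ->; rewrite e_irr.
Qed.

(* Two non-adjacent [s], [t] of [S] would be joined through [C] by a chordless path, which
   [x] closes into a hole. *)
Lemma separator_clique : clique S.
Proof.
apply/cliqueP => s t; rewrite !inE.
move=> /and3P[sT xs /exists_inP[c1 c1C sc1]] /and3P[tT xt /exists_inP[c2 c2C tc2]] neq_st.
pose W := far T x :|: [set s; t].
have sW : s \in W by rewrite !inE eqxx orbT.
have tW : t \in W by rewrite !inE eqxx !orbT.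
have sub_W : far T x \subset W by apply: subsetUl.
have c_W c : c \in C -> c \in W by move/(subsetP (component_sub y_far))/(subsetP sub_W).
apply: (@chordal_path_adj W x) => //.
- rewrite /W in_setU in_set2 inE eqxx andbF /=.
  by apply/norP; split; [apply: contraTneq xs | apply: contraTneq xt] => ->; rewrite e_irr.
- move=> w; rewrite /W in_setU in_set2 => /orP[w_far | w_st]; last first.
    by rewrite w_st; case/orP: w_st => /eqP->.
  rewrite (negbTE (far_nadj w_far)); apply/esym/norP.
  by split; apply: contraTneq w_far => ->; rewrite inE ?xs ?xt !andbF.
- have c12 : connect (induced (far T x)) c1 c2.
    rewrite /component !inE in c1C c2C.
    by rewrite (sym_connect_sym (@induced_sym _)) in c1C; apply: connect_trans c1C c2C.
  apply: (@connect_trans _ _ c1); first by apply: connect1; rewrite /induced /= sW c_W.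
  apply: (@connect_trans _ _ c2); last by apply: connect1; rewrite /induced /= c_W // tW e_sym.
  exact: connect_induced_sub sub_W _ _ c12.
Qed.

End Separator.

(* Dirac's lemma, with a simplicial vertex chosen non-adjacent to [x].  The separator [S]
   is a clique cutting the component [C] of [y] off from [x], so a vertex of [C] simplicial in
   the smaller set [C :|: S] is simplicial in [T]; of two non-adjacent simplicial vertices of
   [C :|: S] given by induction, at most one lies in the clique [S]. *)
Lemma far_simplicial n T x y : #|T| <= n -> x \in T -> y \in far T x ->
  exists2 z, z \in far T x & simplicial T z.
Proof.
elim: n T x y => [|n IHn] T x y le_T xT y_far.
  by move: le_T; rewrite leqn0 => /eqP/cards0_eq T0; rewrite T0 inE in xT.
set C := component (far T x) y; set S := separator T x y.
have le_CS : #|C :|: S| <= n by rewrite -ltnS (leq_trans (card_component_separator xT y_far)).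
have yC : y \in C by rewrite inE connect0.
have [CS_clique | /cliquePn[u [w [uCS wCS neq_uw nuw]]]] := boolP (clique (C :|: S)).
  by apply: (simplicial_component y_far yC); apply: clique_subset CS_clique; apply: subsetIl.
have w_far : w \in far (C :|: S) u by rewrite farE wCS eq_sym neq_uw.
have [z1 z1_far z1_simp] := IHn _ _ _ le_CS uCS w_far.
have [z1C | z1NC] := boolP (z1 \in C); first exact: (simplicial_component y_far z1C z1_simp).
have u_far : u \in far (C :|: S) z1.
  by move: z1_far; rewrite !farE uCS eq_sym e_sym => /and3P[_ -> ->].
have z1S : z1 \in S.
  by move: z1_far z1NC; rewrite farE in_setU => /and3P[/orP[-> | //] _ _].
have z1CS : z1 \in C :|: S by rewrite in_setU z1S orbT.
have [z2 z2_far z2_simp] := IHn _ _ _ le_CS z1CS u_far.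
have [z2C | z2NC] := boolP (z2 \in C); first exact: (simplicial_component y_far z2C z2_simp).
move: z2_far z2NC; rewrite farE in_setU => /and3P[/orP[-> // | z2S] neq_21 n12] _.
have /cliqueP S_clique := separator_clique y_far.
by case/negP: n12; apply: S_clique; rewrite // eq_sym.
Qed.

Lemma simplicial_exists T : T != set0 -> exists2 z, z \in T & simplicial T z.
Proof.
case/set0Pn=> z0 z0T.
have [T_clique | /cliquePn[u [w [uT wT neq_uw nuw]]]] := boolP (clique T).
  by exists z0; rewrite // /simplicial (clique_subset _ T_clique) ?subsetIl.
have w_far : w \in far T u by rewrite farE wT eq_sym neq_uw.
have [z z_far z_simp] := far_simplicial (leqnn _) uT w_far.
by exists z; first by move: z_far; rewrite farE => /andP[].
Qed.

(* For [k = 0] the empty set, which is a clique, contributes [1]. *)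
Definition alt_cliques k T : R :=
  \big[Rplus/0%R]_(I : {set V} | [&& I \subset T, clique I & k <= #|I|]) ((-1) ^ #|I|)%R.

Lemma clique_setU1 v J : v \notin J -> clique (v |: J) = clique J && (J \subset nbhd v).
Proof.
move=> vNJ; apply/cliqueP/andP => [cl | [/cliqueP clJ /subsetP J_nbhd]].
  split; first by apply/cliqueP => a b aJ bJ; apply: cl; rewrite in_setU1 ?aJ ?bJ orbT.
  apply/subsetP => b bJ; rewrite inE; apply: cl; rewrite ?setU11 ?in_setU1 ?bJ ?orbT //.
  by apply: contraNneq vNJ => ->.
move=> a b; rewrite !in_setU1 => /orP[/eqP-> | aJ] /orP[/eqP-> | bJ]; rewrite ?eqxx //.
- by move=> _; have := J_nbhd b bJ; rewrite inE.
- by move=> _; have := J_nbhd a aJ; rewrite inE e_sym.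
- exact: clJ.
Qed.

(* The cliques through [v] are the [v |: J] with [J] a clique of [T :&: nbhd v]. *)
Lemma alt_cliquesD1 k T v : v \in T ->
  alt_cliques k T = (alt_cliques k (T :\ v) - alt_cliques k.-1 (T :&: nbhd v))%R.
Proof.
move=> vT; rewrite /alt_cliques (bigID (fun I : {set V} => v \in I)) /= Rplus_comm.
congr (_ + _)%R.
  apply: eq_bigl => I; rewrite subsetD1.
  by case: (I \subset T); case: (v \in I); rewrite /= ?andbT ?andbF.
rewrite (reindex_onto (fun J => v |: J) (fun I => I :\ v)) /=; last first.
  by move=> I /andP[_ vI]; rewrite setD1K.
rewrite [RHS](_ : forall a : R, - a = -1 * a)%R; last by move=> a; ring.
rewrite big_distrr /=; apply: eq_big => J.
  have [vJ | vNJ] := boolP (v \in J).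
    rewrite setU11 /= andbT (_ : (v |: J) :\ v == J = false); last first.
      by apply/negbTE/eqP => eqJ; move: vJ; rewrite -eqJ setD11.
    rewrite andbF; apply/esym/negbTE; apply: contraL vJ => /andP[/subsetP J_nbhd _].
    by apply/negP => /J_nbhd; rewrite !inE e_irr andbF.
  rewrite setU11 setU1K // eqxx !andbT subUset sub1set vT /= clique_setU1 // cardsU1 vNJ.
  by rewrite subsetI; case: (J \subset T); case: (clique J); case: (J \subset nbhd v); case: k.
case/andP=> _ /eqP eqJ; have vNJ : v \notin J by rewrite -eqJ setD11.
by rewrite cardsU1 vNJ add1n.
Qed.

Lemma alt_cliques_set0 k : 0 < k -> alt_cliques k set0 = 0%R.
Proof.
move=> k_gt0; rewrite /alt_cliques big_pred0 // => I; rewrite subset0.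
by case: eqP => //= ->; rewrite cards0 leqNgt k_gt0 andbF.
Qed.

Lemma nbhd_clique Q v : clique Q -> v \in Q -> Q :&: nbhd v = Q :\ v.
Proof.
move=> /cliqueP clQ vQ; apply/setP => z; rewrite !inE andbC.
have [zQ | ] := boolP (z \in Q); last by rewrite !andbF.
have [-> | neq_zv] := eqVneq z v; first by rewrite e_irr.
by rewrite clQ // eq_sym.
Qed.

Lemma alt_cliques0_ge0 Q : clique Q -> (0 <= alt_cliques 0 Q)%R.
Proof.
move=> clQ; have [-> | /set0Pn[v vQ]] := eqVneq Q set0.
  rewrite /alt_cliques (big_pred1 set0) ?cards0 /=; first lra.
  move=> I /=; rewrite subset0 andbT; case: eqP => //= ->.
  by apply/cliqueP => a b; rewrite inE.
by rewrite (alt_cliquesD1 0 vQ) /= nbhd_clique //; lra.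
Qed.

Lemma alt_cliques_sign k T : 0 < k -> (0 <= (-1) ^ k * alt_cliques k T)%R.
Proof.
move: {2}#|T| (leqnn #|T|) => n; elim: n k T => [|n IHn] k T le_T k_gt0.
  by move: le_T; rewrite leqn0 => /eqP/cards0_eq->; rewrite alt_cliques_set0 //; lra.
have [-> | T_neq0] := eqVneq T set0; first by rewrite alt_cliques_set0 //; lra.
have [v vT v_simp] := simplicial_exists T_neq0.
have le_Tv : #|T :\ v| <= n by move: le_T; rewrite (cardsD1 v T) vT.
have le_Tnv : #|T :&: nbhd v| <= n.
  apply: leq_trans le_Tv; apply/subset_leq_card/subsetP => z; rewrite !inE.
  by case/andP=> -> vz; rewrite andbT; apply: contraTneq vz => ->; rewrite e_irr.
case: k k_gt0 => // k _.
have sign_split (a b : R) : ((-1) ^ k.+1 * (a - b) = (-1) ^ k.+1 * a + (-1) ^ k * b)%R.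
  by rewrite /=; ring.
rewrite (alt_cliquesD1 _ vT) sign_split; apply: Rplus_le_le_0_compat; first exact: IHn.
case: k {sign_split} => [|k]; last exact: IHn.
by have := alt_cliques0_ge0 v_simp; rewrite /=; lra.
Qed.

End ChordalGraphs.

Section Events.
Variable Om : probability_space.
Local Notation P := (ps_P Om).
Local Notation M := (ps_meas Om).
Implicit Types X Y : Om -> Prop.

Lemma eq_event X Y : (forall w, X w <-> Y w) -> X = Y.
Proof.
by move=> XY; apply: functional_extensionality => w; apply: propositional_extensionality.
Qed.

Lemma meas0 : M (fun _ => False).
Proof.
rewrite (_ : (fun _ => False) = (fun w => ~ True)); last by apply: eq_event => w; tauto.
by apply: ps_meas_compl; apply: ps_meas_full.
Qed.

Lemma measU X Y : M X -> M Y -> M (fun w => X w \/ Y w).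
Proof.
move=> MX MY; pose F n := if n is 0 then X else Y.
rewrite (_ : (fun w => _) = (fun w => exists n, F n w)); first by apply: ps_meas_cunion => -[].
by apply: eq_event => w; split=> [[Xw | Yw] | [[|n] Fw]]; [exists 0 | exists 1 | left | right].
Qed.

Lemma measI X Y : M X -> M Y -> M (fun w => X w /\ Y w).
Proof.
move=> MX MY; rewrite (_ : (fun w => _) = (fun w => ~ (~ X w \/ ~ Y w))).
  by apply: ps_meas_compl; apply: measU; apply: ps_meas_compl.
by apply: eq_event => w; split; [tauto | move=> nXY; split; apply: NNPP; tauto].
Qed.

Lemma meas_forall (I : finType) (F : I -> Om -> Prop) :
  (forall i, M (F i)) -> M (fun w => forall i, F i w).
Proof.
move=> MF; suff Ms (s : seq I) : M (fun w => forall i, i \in s -> F i w).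
  rewrite (_ : (fun w => _) = (fun w => forall i, i \in index_enum I -> F i w)) //.
  apply: eq_event => w; split=> [Fw i _ | Fw i]; first exact: Fw.
  by apply: Fw; rewrite mem_index_enum.
elim: s => [|i s IHs].
  rewrite (_ : (fun w => _) = (fun _ => True)); first exact: ps_meas_full.
  by apply: eq_event.
rewrite (_ : (fun w => _) = (fun w => F i w /\ forall j, j \in s -> F j w)); first exact: measI.
apply: eq_event => w; split=> [Fw | [Fiw Fsw] j].
  by split=> [|j js]; apply: Fw; rewrite inE ?eqxx ?js ?orbT.
by rewrite inE => /orP[/eqP-> | /Fsw].
Qed.

Lemma prob0 : P (fun _ => False) = 0%R.
Proof.
have sum0 := @ps_P_sigma Om _ (fun _ => meas0) (fun m n _ w Fw _ => Fw).
rewrite (_ : (fun w => exists _ : nat, False) = (fun _ => False)) in sum0; last first.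
  by apply: eq_event => w; split=> [[]|].
set c := P _ in sum0 *; have c_ge0 : (0 <= c)%R by apply: ps_P_nonneg; apply: meas0.
have [c_gt0 | ] := Rle_lt_or_eq_dec _ _ c_ge0; last by [].
have [N /(_ N.+1 (le_S _ _ (le_n _)))] := sum0 c c_gt0.
have partial n : sum_f_R0 (fun _ => c) n = (INR n.+1 * c)%R.
  elim: n => [|n IHn]; first by rewrite /=; ring.
  by rewrite [sum_f_R0 _ n.+1]/= IHn [INR n.+2]S_INR; ring.
rewrite /Rdist partial Rabs_right !S_INR; have := pos_INR N; nra.
Qed.

Lemma probU X Y : M X -> M Y -> (forall w, X w -> Y w -> False) ->
  P (fun w => X w \/ Y w) = (P X + P Y)%R.
Proof.
move=> MX MY XY_disj; pose F n := match n with 0 => X | 1 => Y | _ => fun _ => False end.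
have MF n : M (F n) by case: n => [|[|n]] //; apply: meas0.
have F_disj m n : m <> n -> forall w, F m w -> F n w -> False.
  by case: m n => [|[|m]] [|[|n]] //= _ w; try tauto; move/(_ w) in XY_disj; tauto.
rewrite (_ : (fun w => _) = (fun w => exists n, F n w)); last first.
  apply: eq_event => w.
  by split=> [[Xw | Yw] | [[|[|n]] Fw]] //; [exists 0 | exists 1 | left | right].
apply: (uniqueness_sum _ _ _ (@ps_P_sigma Om F MF F_disj)) => eps eps_gt0.
exists 1%nat => n le1n.
have partial : sum_f_R0 (fun n => P (F n)) n = (P X + P Y)%R.
  elim: n le1n => [|[|n] IHn] le1n; [by inversion le1n | by [] | ].
  by rewrite /= in IHn *; rewrite IHn; [rewrite prob0; ring | lia].
by rewrite /Rdist partial Rminus_diag Rabs_R0.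
Qed.
End Events.

Section Atoms.
Variables (V : finType) (Om : probability_space) (A : V -> Om -> Prop).
Hypothesis A_meas : forall v, ps_meas Om (A v).
Local Notation P := (ps_P Om).
Local Notation M := (ps_meas Om).

Definition atom (T : {set V}) : Om -> Prop := fun w => forall v, v \in T <-> A v w.

Lemma meas_atom T : M (atom T).
Proof.
apply: meas_forall => v; have [vT | vNT] := boolP (v \in T).
  rewrite (_ : (fun w => _) = A v); first exact: A_meas.
  by apply: eq_event => w; split=> [[/(_ isT)] | Avw].
rewrite (_ : (fun w => _) = (fun w => ~ A v w)); first exact/ps_meas_compl/A_meas.
by apply: eq_event => w; split=> [[_ /[apply]] | nAvw].
Qed.

Lemma atom_inj T1 T2 w : atom T1 w -> atom T2 w -> T1 = T2.
Proof.
by move=> w_T1 w_T2; apply/setP => v; apply/idP/idP => [/(w_T1 v)/(w_T2 v) | /(w_T2 v)/(w_T1 v)].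
Qed.

Lemma atom_exists w : exists T, atom T w.
Proof.
exists [set v | if excluded_middle_informative (A v w) then true else false] => v.
by rewrite inE; case: excluded_middle_informative.
Qed.

Lemma prob_atoms (s : seq {set V}) : uniq s ->
  M (fun w => exists2 T, T \in s & atom T w) /\
  P (fun w => exists2 T, T \in s & atom T w) = \big[Rplus/0%R]_(T <- s) P (atom T).
Proof.
elim: s => [|T s IHs] /=.
  rewrite big_nil (_ : (fun w => _) = (fun _ => False)).
    by split; [apply: meas0 | apply: prob0].
  by apply: eq_event => w; split=> // -[].
case/andP=> TNs /IHs[IH_meas IH_prob].
rewrite (_ : (fun w => _) = (fun w => atom T w \/ exists2 T, T \in s & atom T w)).
  split; first exact: measU (meas_atom T) IH_meas.
  rewrite probU ?big_cons ?IH_prob //; first exact: meas_atom.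
  by move=> w w_T [T' T's w_T']; rewrite (atom_inj w_T w_T') T's in TNs.
apply: eq_event => w; split=> [[T' /[!inE] /orP[/eqP-> | ]] | [w_T | [T' T's w_T']]].
- by left.
- by right; exists T'.
- by exists T; rewrite ?inE ?eqxx.
- by exists T'; rewrite // inE T's orbT.
Qed.

Lemma prob_bigcap (I : {set V}) :
  P (bigcap_events A I) = \big[Rplus/0%R]_(T : {set V} | I \subset T) P (atom T).
Proof.
rewrite -big_filter -(proj2 (prob_atoms (filter_uniq _ (index_enum_uniq _)))).
congr P; apply: eq_event => w; split=> [Iw | [T /[!mem_filter] /andP[/subsetP IT _] w_T] v vI].
  have [T w_T] := atom_exists w; exists T => //; rewrite mem_filter mem_index_enum andbT.
  by apply/subsetP => v /Iw /w_T.
exact/w_T/IT.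
Qed.
End Atoms.

Lemma clique_tail_atoms (V : finType) (e : rel V) (Om : probability_space)
    (A : V -> Om -> Prop) (k : nat) : (forall v, ps_meas Om (A v)) -> 0 < k ->
  \big[Rplus/0%R]_(I : {set V} | in_clique_complex e I && (k <= #|I|)) clique_term A I =
  \big[Rplus/0%R]_(T : {set V}) (- alt_cliques e k T * ps_P Om (atom A T))%R.
Proof.
move=> A_meas k_gt0.
under eq_bigr => I _ do rewrite /clique_term (prob_bigcap A_meas) big_distrr big_mkcond /=.
rewrite exchange_big /=; apply: eq_bigr => T _.
rewrite -big_mkcondr -big_distrl /=; congr (_ * _)%R.
rewrite /alt_cliques (_ : forall a : R, - a = -1 * a)%R; last by move=> a; ring.
rewrite big_distrr /=; apply: eq_big => [I | I /andP[/andP[_ le_kI] _]].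
  rewrite /in_clique_complex andbC -!andbA; case: (I \subset T) => //=.
  case: (leqP k #|I|) => [le_kI | ]; rewrite ?andbF //= -card_gt0 (leq_trans k_gt0 le_kI).
  by rewrite /= !andbT.
by case: #|I| (leq_trans k_gt0 le_kI) => // n _; rewrite subSS subn0 /=; ring.
Qed.

Theorem theorem2 (V : finType) (e : rel V)
  (e_sym : symmetric e) (e_irr : irreflexive e) (e_chordal : chordal e)
  (V_nonempty : (0 < #|V|)%N)
  (Om : probability_space) (A : V -> Om -> Prop)
  (A_meas : forall v, ps_meas Om (A v))
  (r : nat) (r_ge1 : (1 <= r)%N) :
  (\big[Rplus/0%R]_(I : {set V} | in_clique_complex e I) clique_term A I
   >= \big[Rplus/0%R]_(I : {set V} | in_clique_complex e I && (leq #|I| (muln 2 r)))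
        clique_term A I)%R.
Proof.
rewrite (bigID (fun I : {set V} => #|I| <= 2 * r)) /=.
set tail := \big[Rplus/0%R]_(I | _ && ~~ _) _.
suff: (0 <= tail)%R by lra.
rewrite /tail (eq_bigl (fun I => in_clique_complex e I && ((2 * r).+1 <= #|I|))); last first.
  by move=> I; rewrite ltnNge.
rewrite clique_tail_atoms //; apply: (big_ind (fun x => 0 <= x)%R) => [|x y|T _]; try lra.
apply: Rmult_le_pos; last exact/ps_P_nonneg/meas_atom.
have := alt_cliques_sign e_sym e_irr e_chordal T (ltn0Sn (2 * r)).
by rewrite pow_1_odd; lra.
Qed.
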